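(* Let $V$ be a quasi-regular mixed lattice vector space and $A$ a linear subspace of $V$. Then $A$ is an ideal if and only if: whenever $x\in V$, $y\in A$ and $s(x)\le s(y)$, we have $x\in A$.
   Context: A mixed lattice vector space is a real vector space $V$ with two partial orderings $\le$ (initial) and $\preceq$ (specific), each compatible with the vector space structure, such that for all $x,y$ the mixed lower envelope $x\curlywedge y=\max\{w: w\preceq x,\ w\le y\}$ and mixed upper envelope $x\curlyvee y=\min\{w: x\preceq w,\ y\le w\}$ exist (max/min with respect to $\le$). $V$ is quasi-regular if $V_{sp}=\{x:0\preceq x\}$ is closed under $\curlywedge,\curlyvee$. An ideal is a linear subspace closed under $\curlywedge,\curlyvee$ which is $(\le)$-order convex ($x\le z\le y$ with $x,y$ in it implies $z$ in it). The symmetric generalized absolute value of $x$ is $s(x)=\tfrac12\big((x\curlyvee 0)+(0\curlyvee(-x))+((-x)\curlyvee 0)+(0\curlyvee x)\big)$. *)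

From HB Require Import structures.
From mathcomp Require Import all_boot all_order all_algebra.
From mathcomp Require Import reals.
Set Implicit Arguments. Unset Strict Implicit. Unset Printing Implicit Defensive.
Import Order.TTheory GRing.Theory Num.Theory.
Local Open Scope ring_scope.

Definition partial_order (T : Type) (r : T -> T -> Prop) : Prop :=
  (forall x, r x x) /\ (forall x y, r x y -> r y x -> x = y) /\
  (forall x y z, r x y -> r y z -> r x z).

Definition vs_compatible (R : realType) (V : lmodType R) (r : V -> V -> Prop) : Prop :=
  (forall x y z : V, r x y -> r (x + z) (y + z)) /\
  (forall (a : R) (x y : V), 0 <= a -> r x y -> r (a *: x) (a *: y)).

(* A mixed lattice vector space structure on V: initial order [ml_le],
   specific order [ml_sp], and the mixed envelopes (whose existence is part
   of the definition; they are uniquely determined by antisymmetry). *)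
Record mixed_lattice (R : realType) (V : lmodType R) := MixedLattice {
  ml_le : V -> V -> Prop;
  ml_sp : V -> V -> Prop;
  ml_low : V -> V -> V;
  ml_up : V -> V -> V;
  ml_le_po : partial_order ml_le;
  ml_sp_po : partial_order ml_sp;
  ml_le_comp : vs_compatible ml_le;
  ml_sp_comp : vs_compatible ml_sp;
  ml_low_spec : forall x y, ml_sp (ml_low x y) x /\ ml_le (ml_low x y) y /\
     (forall w, ml_sp w x -> ml_le w y -> ml_le w (ml_low x y));
  ml_up_spec : forall x y, ml_sp x (ml_up x y) /\ ml_le y (ml_up x y) /\
     (forall w, ml_sp x w -> ml_le y w -> ml_le (ml_up x y) w)
}.

Definition quasi_regular (R : realType) (V : lmodType R) (M : mixed_lattice V) : Prop :=
  forall x y : V, ml_sp M 0 x -> ml_sp M 0 y ->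
    ml_sp M 0 (ml_low M x y) /\ ml_sp M 0 (ml_up M x y).

Definition linear_subspace (R : realType) (V : lmodType R) (A : V -> Prop) : Prop :=
  A 0 /\ (forall x y, A x -> A y -> A (x + y)) /\
  (forall (a : R) x, A x -> A (a *: x)).

Definition ml_ideal (R : realType) (V : lmodType R) (M : mixed_lattice V)
  (A : V -> Prop) : Prop :=
  linear_subspace A /\
  (forall x y, A x -> A y -> A (ml_low M x y) /\ A (ml_up M x y)) /\
  (forall x y z, A x -> A y -> ml_le M x z -> ml_le M z y -> A z).

Definition sabs (R : realType) (V : lmodType R) (M : mixed_lattice V) (x : V) : V :=
  (2%:R : R)^-1 *: (ml_up M x 0 + ml_up M 0 (- x) + ml_up M (- x) 0 + ml_up M 0 x).

(* In a quasi-regular space 0 ⪯ u implies 0 <= u.  Writing p(y) = 0 ⋎ y, the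
   mixed envelopes are translates of p: x ⋎ y = x + p(y - x) and
   x ⋏ y = x - p(x - y), and s(x) = p(x) + p(-x).  Hence a subspace is an ideal
   iff it is (<=)-convex and closed under p.  Solidity then follows from
   -s(x) <= x <= s(x), and conversely solidity gives closure under p because
   s(p(y)) = p(y) <= s(y), and convexity because x <= z <= y forces
   s(z) <= s(x) + s(y) = s(s(x) + s(y)). *)
From HB Require Import structures.
From mathcomp Require Import all_boot all_order all_algebra.
From mathcomp Require Import reals.
Set Implicit Arguments.
Unset Strict Implicit.
Unset Printing Implicit Defensive.
Import Order.TTheory GRing.Theory Num.Theory.
Local Open Scope ring_scope.

Section PartialOrder.
Variables (T : Type) (r : T -> T -> Prop) (po : partial_order r).

Lemma po_refl x : r x x.
Proof. by case: po. Qed.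

Lemma po_anti x y : r x y -> r y x -> x = y.
Proof. by case: po => _ [anti _]; apply: anti. Qed.

Lemma po_trans x y z : r x y -> r y z -> r x z.
Proof. by case: po => _ [_ trans]; apply: trans. Qed.

End PartialOrder.

Section CompatibleOrder.
Variables (R : realType) (V : lmodType R) (r : V -> V -> Prop).
Hypotheses (po : partial_order r) (cp : vs_compatible r).

Lemma compat_addr z x y : r x y -> r (x + z) (y + z).
Proof. by case: cp => addr _; apply: addr. Qed.

Lemma compat_subr_ge0 x y : r 0 (y - x) <-> r x y.
Proof.
split=> [|xy]; first by move/(compat_addr x); rewrite add0r subrK.
by have := compat_addr (- x) xy; rewrite subrr.
Qed.

Lemma compat_oppr x y : r x y -> r (- y) (- x).
Proof. by move=> /compat_subr_ge0 xy; apply/compat_subr_ge0; rewrite opprK addrC. Qed.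

Lemma compat_addr_ge0 a b : r 0 a -> r 0 b -> r 0 (a + b).
Proof.
move=> a0 b0; apply: (po_trans po b0).
by have := compat_addr b a0; rewrite add0r addrC.
Qed.

Lemma compat_add a b x y : r a b -> r x y -> r (a + x) (b + y).
Proof.
move=> /compat_subr_ge0 ab /compat_subr_ge0 xy; apply/compat_subr_ge0.
by rewrite opprD addrACA; apply: compat_addr_ge0.
Qed.

End CompatibleOrder.

Section LinearSubspace.
Variables (R : realType) (V : lmodType R) (A : V -> Prop).
Hypothesis hA : linear_subspace A.

Lemma subspace0 : A 0.
Proof. by case: hA. Qed.

Lemma subspaceD x y : A x -> A y -> A (x + y).
Proof. by case: hA => _ [addA _]; apply: addA. Qed.

Lemma subspaceN x : A x -> A (- x).
Proof. by case: hA => _ [_ scaleA] Ax; rewrite -scaleN1r; apply: scaleA. Qed.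

Lemma subspaceB x y : A x -> A y -> A (x - y).
Proof. by move=> Ax Ay; apply: subspaceD (subspaceN Ay). Qed.

End LinearSubspace.

Section MixedLattice.
Variables (R : realType) (V : lmodType R) (M : mixed_lattice V).

Local Notation le := (ml_le M).
Local Notation sp := (ml_sp M).
Local Notation pos := (ml_up M 0).
Local Notation lep := (ml_le_po M).
Local Notation spp := (ml_sp_po M).
Local Notation lec := (ml_le_comp M).
Local Notation spc := (ml_sp_comp M).

Lemma pos_sp0 y : sp 0 (pos y).
Proof. by have [] := ml_up_spec M 0 y. Qed.

Lemma le_pos y : le y (pos y).
Proof. by have [_ []] := ml_up_spec M 0 y. Qed.

Lemma pos_min y w : sp 0 w -> le y w -> le (pos y) w.
Proof. by have [_ [_]] := ml_up_spec M 0 y; apply. Qed.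

Lemma pos_le y y' : le y y' -> le (pos y) (pos y').
Proof. by move=> yy'; apply: pos_min (pos_sp0 y') (po_trans lep yy' (le_pos y')). Qed.

Lemma pos_id k : sp 0 k -> pos k = k.
Proof. by move=> k0; apply: (po_anti lep); [apply: pos_min k0 (po_refl lep k)|apply: le_pos]. Qed.

Lemma ml_upE x y : ml_up M x y = x + pos (y - x).
Proof.
have [spx [ley upmin]] := ml_up_spec M x y.
apply: (po_anti lep).
- apply: upmin; first by apply/(compat_subr_ge0 spc); rewrite addrAC subrr add0r; apply: pos_sp0.
  by have := compat_addr lec x (le_pos (y - x)); rewrite subrK addrC.
- have : le (pos (y - x)) (ml_up M x y - x).
    apply: pos_min; first exact/(compat_subr_ge0 spc).
    exact (compat_addr lec (- x) ley).
  by move/(compat_addr lec x); rewrite subrK addrC.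
Qed.

Lemma ml_lowE x y : ml_low M x y = x - pos (x - y).
Proof.
have [spx [ley lowmax]] := ml_low_spec M x y.
apply: (po_anti lep).
- have : le (pos (x - y)) (x - ml_low M x y).
    apply: pos_min; first exact/(compat_subr_ge0 spc).
    exact (compat_add lep lec (po_refl lep x) (compat_oppr lec ley)).
  by move/(compat_subr_ge0 lec) => le_low; apply/(compat_subr_ge0 lec); rewrite addrAC.
- apply: lowmax; first by apply/(compat_subr_ge0 spc); rewrite opprB addrC subrK; apply: pos_sp0.
  apply/(compat_subr_ge0 lec); rewrite opprB addrCA -(opprB x y).
  by apply/(compat_subr_ge0 lec); apply: le_pos.
Qed.

Lemma sabsE x : sabs M x = pos x + pos (- x).
Proof.
rewrite /sabs (ml_upE x) (ml_upE (- x)) !sub0r opprK.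
set p := pos x; set q := pos (- x).
have -> : x + q + q + (- x + p) + p = (p + q) *+ 2.
  rewrite mulr2n -(addrA x) addrACA subrr add0r -addrA addrC.
  by rewrite [LHS]addrAC (addrC q p) addrA.
rewrite -scaler_nat scalerA mulVf ?scale1r //.
by rewrite pnatr_eq0.
Qed.

Lemma sabsN x : sabs M (- x) = sabs M x.
Proof. by rewrite !sabsE opprK addrC. Qed.

Lemma sabs_sp0 x : sp 0 (sabs M x).
Proof. by rewrite sabsE; exact (compat_addr_ge0 spp spc (pos_sp0 _) (pos_sp0 _)). Qed.

Lemma ml_idealP (A : V -> Prop) : linear_subspace A ->
  ml_ideal M A <->
  (forall y, A y -> A (pos y)) /\
  (forall x y z, A x -> A y -> le x z -> le z y -> A z).
Proof.
move=> hA; split=> [[_ [closed convex]]|[Apos convex]].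
  by split=> // y Ay; case: (closed 0 y (subspace0 hA) Ay).
split=> //; split=> // x y Ax Ay; rewrite ml_lowE (ml_upE x y).
by split; [apply: (subspaceB hA)|apply: (subspaceD hA)]; rewrite //; apply/Apos/(subspaceB hA).
Qed.

Section QuasiRegular.
Hypothesis hqr : quasi_regular M.

(* [0 ⋏ u] lies in [V_sp] by quasi-regularity and is ⪯ 0, so it is 0. *)
Lemma sp0W u : sp 0 u -> le 0 u.
Proof.
move=> u0; have [low_sp [low_le _]] := ml_low_spec M 0 u.
have [low0 _] := hqr (po_refl spp 0) u0.
by rewrite -(po_anti spp low_sp low0).
Qed.

Lemma pos_ge0 y : le 0 (pos y).
Proof. exact/sp0W/pos_sp0. Qed.

Lemma pos_opp_eq0 k : sp 0 k -> pos (- k) = 0.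
Proof.
move=> k0; apply: (po_anti lep); last exact: pos_ge0.
apply: pos_min (po_refl spp 0) _.
by rewrite -oppr0; apply/(compat_oppr lec)/sp0W.
Qed.

Lemma sabs_id k : sp 0 k -> sabs M k = k.
Proof. by move=> k0; rewrite sabsE pos_id // pos_opp_eq0 // addr0. Qed.

Lemma pos_le_sabs y : le (pos y) (sabs M y).
Proof.
rewrite sabsE; have := compat_add lep lec (po_refl lep (pos y)) (pos_ge0 (- y)).
by rewrite addr0.
Qed.

Lemma le_sabs x : le x (sabs M x).
Proof. exact (po_trans lep (le_pos x) (pos_le_sabs x)). Qed.

Lemma ge_sabsN x : le (- sabs M x) x.
Proof. by rewrite -sabsN -[x in le _ x]opprK; apply/(compat_oppr lec)/le_sabs. Qed.

Lemma sabs_le_between x y z : le x z -> le z y -> le (sabs M z) (sabs M x + sabs M y).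
Proof.
move=> xz zy; rewrite sabsE addrC; apply: (compat_add lep lec).
- rewrite -sabsN; exact (po_trans lep (pos_le (compat_oppr lec xz)) (pos_le_sabs (- x))).
- exact (po_trans lep (pos_le zy) (pos_le_sabs y)).
Qed.

End QuasiRegular.

End MixedLattice.

Theorem theorem5p18 (R : realType) (V : lmodType R) (M : mixed_lattice V)
  (hqr : quasi_regular M) (A : V -> Prop) (hA : linear_subspace A) :
  ml_ideal M A <->
  (forall x y : V, A y -> ml_le M (sabs M x) (sabs M y) -> A x).
Proof.
have lep := ml_le_po M; have lec := ml_le_comp M.
rewrite ml_idealP //; split=> [[Apos convex] x y Ay sxy|solid].
  have As : A (sabs M y).
    by rewrite sabsE; apply: (subspaceD hA); apply: Apos; rewrite //; apply: (subspaceN hA).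
  apply: (convex (- sabs M y) (sabs M y)) => //; first exact: subspaceN.
  - exact (po_trans lep (compat_oppr lec sxy) (ge_sabsN hqr x)).
  - exact (po_trans lep (le_sabs hqr x) sxy).
have As x : A x -> A (sabs M x).
  move=> Ax; apply: (solid (sabs M x) x Ax).
  by rewrite (sabs_id hqr (sabs_sp0 M x)); apply: po_refl.
split=> [y Ay|x y z Ax Ay xz zy].
  apply: (solid _ _ (As y Ay)).
  by rewrite (sabs_id hqr (pos_sp0 M y)) (sabs_id hqr (sabs_sp0 M y)); apply: pos_le_sabs.
have sxy0 : ml_sp M 0 (sabs M x + sabs M y).
  exact (compat_addr_ge0 (ml_sp_po M) (ml_sp_comp M) (sabs_sp0 M x) (sabs_sp0 M y)).
apply: (solid _ _ (subspaceD hA (As x Ax) (As y Ay))).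
by rewrite (sabs_id hqr sxy0); apply: sabs_le_between xz zy.
Qed.
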